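(* Let $\mathcal{X}$ be a measurable space, $K\ge 1$, and let classifiers be measurable maps $\mathcal{X}\to[K]=\{1,\dots,K\}$. Let $\mathcal{B}$ assign to each $x\in\mathcal{X}$ a set $\mathcal{B}(x)\subseteq\mathcal{X}$, and for $V\subseteq\mathcal{X}$ let $\mathcal{N}(V)=\{x\in\mathcal{X}:\exists x'\in V \text{ with } \mathcal{B}(x)\cap\mathcal{B}(x')\neq\emptyset\}$. Fix a classifier $G_{pl}$ (the pseudo-labeler). Let $Q$ be a probability measure on $\mathcal{X}$ satisfying the $c$-expansion property for a non-increasing function $c:[0,1]\to(0,\infty)$, i.e. $Q(\mathcal{N}(S))\ge c(Q(S))\,Q(S)$ for every measurable $S\subseteq\mathcal{X}$. Let $H$ be a classifier and put $\gamma_H=c\big(Q(\{x\in\mathcal{X}:G_{pl}(x)\neq H(x)\})\big)$, and assume $\gamma_H>1$. For a classifier $F$ let $\mathcal{S}_{\mathcal{B}}(F)=\{x\in\mathcal{X}: F(x)=F(x')\ \forall x'\in\mathcal{B}(x)\}$ and let $\mathcal{S}_{\mathcal{B}}^c(F)$ be its complement. For a classifier $F$ define $$\mathcal{L}_{Q,H}(F)=\frac{\gamma_H+1}{\gamma_H-1}Q(\{x:F(x)\neq G_{pl}(x)\})+\frac{2\gamma_H}{\gamma_H-1}Q(\mathcal{S}_{\mathcal{B}}^c(F))+\frac{2\gamma_H}{\gamma_H-1}Q(\mathcal{S}_{\mathcal{B}}^c(H))-Q(\{x:G_{pl}(x)\neq H(x)\}).$$ Then for every classifier $F$, $Q(\{x\in\mathcal{X}:F(x)\neq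 H(x)\})\le\mathcal{L}_{Q,H}(F)$.
   Context: All sets considered are assumed measurable. $\mathcal{B}(x)$ is interpreted as the set of (augmented) neighbors of $x$; $\mathcal{N}(V)$ is the neighborhood of a set $V$. *)

From HB Require Import structures.
From mathcomp Require Import all_boot all_order all_algebra.
From mathcomp Require Import all_classical all_reals all_analysis.
Set Implicit Arguments. Unset Strict Implicit. Unset Printing Implicit Defensive.
Import Order.TTheory GRing.Theory Num.Theory.
Local Open Scope classical_set_scope.
Local Open Scope ring_scope.

(* A classifier X -> [K] (here [K] is represented by 'I_K = {0,..,K-1}),
   measurable w.r.t. the discrete sigma-algebra on [K]. *)
Definition classifier d (T : measurableType d) (K : nat) (F : T -> 'I_K) : Prop :=
  forall k : 'I_K, measurable (F @^-1` [set k]).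

Definition nbhd_set (T : Type) (B : T -> set T) (V : set T) : set T :=
  [set x | exists2 x', V x' & B x `&` B x' !=set0].

Definition robust_set (T : Type) (K : nat) (B : T -> set T) (F : T -> 'I_K) : set T :=
  [set x | forall x', B x x' -> F x = F x'].

Definition prb d (T : measurableType d) (R : realType) (Q : probability T R)
  (A : set T) : R := fine (Q A).

Definition LQH d (T : measurableType d) (R : realType) (K : nat)
  (B : T -> set T) (Gpl H : T -> 'I_K) (Q : probability T R) (c : R -> R)
  (F : T -> 'I_K) : R :=
  let g := c (prb Q [set x | Gpl x <> H x]) in
  (g + 1) / (g - 1) * prb Q [set x | F x <> Gpl x]
  + (2 * g) / (g - 1) * prb Q (~` robust_set B F)
  + (2 * g) / (g - 1) * prb Q (~` robust_set B H)
  - prb Q [set x | Gpl x <> H x].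

(* Let D, E, A be the sets where F and H, G_pl and H, F and G_pl disagree, and
   U the part of D ∩ E on which both F and H are robust.  The symmetric
   difference of D and E lies in A, so Q(D) + Q(E) <= 2 Q(D ∩ E) + Q(A), and
   D ∩ E is covered by U and the non-robust points.  A point of N(U) that is
   robust for F and H shares a label of F and of H with a point of U, hence lies
   in U or in A: so Q(N(U)) <= Q(U) + Q(A) + Q(non-robust).  As U ⊆ E and c is
   non-increasing, expansion gives γ_H Q(U) <= Q(N(U)), and γ_H > 1 bounds Q(U)
   by (Q(A) + Q(non-robust)) / (γ_H - 1). *)
From HB Require Import structures.
From mathcomp Require Import all_boot all_order all_algebra.
From mathcomp Require Import all_classical all_reals all_analysis.
From mathcomp Require Import lra.
Set Implicit Arguments. Unset Strict Implicit. Unset Printing Implicit Defensive.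
Import Order.TTheory GRing.Theory Num.Theory.
Local Open Scope classical_set_scope.
Local Open Scope ring_scope.

Section prb.
Context d (T : measurableType d) (R : realType) (Q : probability T R).
Implicit Types A B C : set T.

Lemma prbE A : measurable A -> (prb Q A)%:E = Q A.
Proof. by move=> mA; rewrite /prb fineK// fin_num_measure. Qed.

Lemma prb_ge0 A : measurable A -> 0 <= prb Q A.
Proof. by move=> mA; rewrite -lee_fin prbE. Qed.

Lemma prb_le1 A : measurable A -> prb Q A <= 1.
Proof. by move=> mA; rewrite -lee_fin prbE// probability_le1. Qed.

Lemma le_prb A B : measurable A -> measurable B -> A `<=` B ->
  prb Q A <= prb Q B.
Proof. by move=> mA mB AB; rewrite -lee_fin !prbE// le_measure// inE. Qed.

Lemma prbU2 A B : measurable A -> measurable B ->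
  prb Q (A `|` B) <= prb Q A + prb Q B.
Proof.
by move=> mA mB; rewrite -lee_fin EFinD !prbE ?measureU2//; exact: measurableU.
Qed.

Lemma le_prbU2 A B C : measurable A -> measurable B -> measurable C ->
  A `<=` B `|` C -> prb Q A <= prb Q B + prb Q C.
Proof.
move=> mA mB mC ABC; apply/(le_trans _ (prbU2 mB mC))/le_prb => //.
exact: measurableU.
Qed.

Lemma prbDI A B : measurable A -> measurable B ->
  prb Q A = prb Q (A `\` B) + prb Q (A `&` B).
Proof.
move=> mA mB; apply: EFin_inj; rewrite EFinD !prbE//; first exact: measureDI.
  exact: measurableI.
exact: measurableD.
Qed.

Lemma prb_setDU_le A B C : measurable A -> measurable B -> measurable C ->
  A `\` B `|` B `\` A `<=` C -> prb Q A + prb Q B <= 2 * prb Q (A `&` B) + prb Q C.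
Proof.
move=> mA mB mC symC.
have mAB : measurable (A `\` B) by exact: measurableD.
have mBA : measurable (B `\` A) by exact: measurableD.
have disj : (A `\` B) `&` (B `\` A) = set0.
  by apply/seteqP; split => // x [[_ nBx] [/nBx]].
have sym : prb Q (A `\` B) + prb Q (B `\` A) <= prb Q C.
  have mABA : measurable (A `\` B `|` B `\` A) by exact: measurableU.
  apply: le_trans (le_prb mABA mC symC).
  by rewrite -lee_fin EFinD !prbE ?measureU.
by rewrite (prbDI mA mB) (prbDI mB mA) setIC; lra.
Qed.

End prb.

Lemma measurable_neq d (T : measurableType d) (K : nat) (F G : T -> 'I_K) :
  classifier F -> classifier G -> measurable [set x | F x <> G x].
Proof.
move=> cF cG.
have -> : [set x | F x <> G x] =
    \bigcup_(k in [set: 'I_K]) (F @^-1` [set k] `&` ~` (G @^-1` [set k])).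
  apply/seteqP; split => x /=.
    by move=> FG; exists (F x) => //=; split => //= GF; apply: FG.
  by move=> [k _ [/= -> /= Gk]] kG; apply: Gk; rewrite kG.
apply: fin_bigcup_measurable; first exact: finite_finset.
by move=> k _; apply: measurableI => //; exact: measurableC.
Qed.

Section disagreement.
Variables (T : Type) (K : nat) (B : T -> set T) (F G H : T -> 'I_K).

Lemma disagreement_setDU_sub :
  [set x | F x <> H x] `\` [set x | G x <> H x] `|`
  [set x | G x <> H x] `\` [set x | F x <> H x] `<=` [set x | F x <> G x].
Proof.
move=> x [[/= FH GH]|[/= GH FH]] FG.
  by apply: GH => GHx; apply: FH; rewrite FG.
by apply: FH => FHx; apply: GH; rewrite -FG.
Qed.

Lemma nbhd_set_robust_disagreement_sub :
  let S := robust_set B F `&` robust_set B H in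
  let U := [set x | F x <> H x] `&` [set x | G x <> H x] `&` S in
  nbhd_set B U `<=` (U `|` [set x | F x <> G x]) `|` ~` S.
Proof.
move=> S U x [x' [[/= FH' GH'] [SF' SH']] [z [Bxz Bx'z]]].
have [[SFx SHx]|] := pselect (S x); last by right.
have FHx : F x <> H x.
  by rewrite (SFx z Bxz) (SHx z Bxz) -(SF' z Bx'z) -(SH' z Bx'z).
have [GHx|GHx] := pselect (G x = H x); last by left; left.
by left; right => FGx; apply: FHx; rewrite FGx.
Qed.

End disagreement.

Lemma expansion_le_nbhd_set d (T : measurableType d) (R : realType)
    (Q : probability T R) (B : T -> set T) (c : R -> R) (U E : set T) :
  (forall s t : R, 0 <= s -> s <= t -> t <= 1 -> c t <= c s) ->
  (forall S : set T, measurable S ->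
     c (prb Q S) * prb Q S <= prb Q (nbhd_set B S)) ->
  measurable U -> measurable E -> U `<=` E ->
  c (prb Q E) * prb Q U <= prb Q (nbhd_set B U).
Proof.
move=> cmono cexp mU mE UE; apply: le_trans (cexp _ mU).
apply: ler_wpM2r; first exact: prb_ge0.
by apply: cmono; [exact: prb_ge0 | exact: le_prb | exact: prb_le1].
Qed.

Lemma LQH_bound (R : realFieldType) (g a b h n x u p q : R) :
  1 < g -> p + q <= 2 * x + a -> x <= u + n -> g * u <= u + a + n ->
  n <= b + h ->
  p <= (g + 1) / (g - 1) * a + 2 * g / (g - 1) * b + 2 * g / (g - 1) * h - q.
Proof.
move=> g1 pq xu gu nbh; have g0 : 0 < g - 1 by rewrite subr_gt0.
have -> : (g + 1) / (g - 1) * a + 2 * g / (g - 1) * b + 2 * g / (g - 1) * h =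
    ((g + 1) * a + 2 * g * b + 2 * g * h) / (g - 1).
  by rewrite !mulrDl !(mulrAC _ (g - 1)^-1).
rewrite lerBrDr ler_pdivlMr//.
have : (g - 1) * n <= (g - 1) * (b + h) by apply: ler_wpM2l; [exact: ltW | lra].
have : (g - 1) * (p + q) <= (g - 1) * (2 * u + 2 * n + a).
  by apply: ler_wpM2l; [exact: ltW | lra].
lra.
Qed.

Theorem mainTheorem1 (d : measure_display) (T : measurableType d) (R : realType)
  (K : nat) (HK : (1 <= K)%N) (B : T -> set T) (Gpl : T -> 'I_K)
  (Q : probability T R) (c : R -> R) (H : T -> 'I_K) :
  classifier Gpl -> classifier H ->
  (* all sets considered are measurable *)
  (forall S : set T, measurable S -> measurable (nbhd_set B S)) ->
  measurable (robust_set B H) ->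
  (* c : [0,1] -> (0, oo), non-increasing *)
  (forall t : R, 0 <= t <= 1 -> 0 < c t) ->
  (forall s t : R, 0 <= s -> s <= t -> t <= 1 -> c t <= c s) ->
  (* c-expansion *)
  (forall S : set T, measurable S ->
     c (prb Q S) * prb Q S <= prb Q (nbhd_set B S)) ->
  1 < c (prb Q [set x | Gpl x <> H x]) ->
  forall F : T -> 'I_K, classifier F -> measurable (robust_set B F) ->
    prb Q [set x | F x <> H x] <= LQH B Gpl H Q c F.
Proof.
move=> cG cH mN mSH _ cmono cexp g1 F cF mSF.
set D := [set x | F x <> H x]; set E := [set x | Gpl x <> H x].
set A := [set x | F x <> Gpl x]; set S := robust_set B F `&` robust_set B H.
set U := D `&` E `&` S.
have mD : measurable D := measurable_neq cF cH.
have mE : measurable E := measurable_neq cG cH.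
have mA : measurable A := measurable_neq cF cG.
have mS : measurable S by exact: measurableI.
have mU : measurable U by do 2 apply: measurableI.
have mnS : measurable (~` S) by exact: measurableC.
have symdiff : prb Q D + prb Q E <= 2 * prb Q (D `&` E) + prb Q A.
  exact/prb_setDU_le/disagreement_setDU_sub.
have core : prb Q (D `&` E) <= prb Q U + prb Q (~` S).
  apply: le_prbU2 => //; first exact: measurableI.
  by move=> x DEx; have [Sx|] := pselect (S x); [left | right].
have expand : c (prb Q E) * prb Q U <= prb Q U + prb Q A + prb Q (~` S).
  apply: le_trans (expansion_le_nbhd_set cmono cexp mU mE _) _.
    by move=> x [[_ Ex] _].
  have mUA : measurable (U `|` A) by exact: measurableU.
  have := @nbhd_set_robust_disagreement_sub _ _ B F Gpl H.
  move=> /(le_prbU2 Q (mN _ mU) mUA mnS) /le_trans; apply.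
  by rewrite lerD2r prbU2.
have nonrobust : prb Q (~` S) <= prb Q (~` robust_set B F) + prb Q (~` robust_set B H).
  by rewrite setCI prbU2//; exact: measurableC.
exact: LQH_bound symdiff core expand nonrobust.
Qed.
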